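(* Let $f,g\in C[0,1]$. Let $R(f,g)=P(f,g)/Q(f,g)$, where $P(f,g)(x)=p(f(x),g(x))$ and $Q(f,g)(x)=q(f(x),g(x))$ for real polynomials $p,q$ in two variables, and where $Q(f,g)(x)\neq0$ for all $x\in[0,1]$. Then $$\overline{\dim}_B G(R(f,g))\le \max\{\overline{\dim}_B G(f),\ \overline{\dim}_B G(g)\}.$$
   Context: $C[0,1]$ is the space of real-valued continuous functions on $[0,1]$; $G(h)=\{(x,h(x)):x\in[0,1]\}\subset\mathbb{R}^2$ is the graph of $h$. For a nonempty bounded set $F$, $N_\delta(F)$ is the smallest number of sets of diameter at most $\delta$ covering $F$, and $\overline{\dim}_B F=\limsup_{\delta\to0}\frac{\log N_\delta(F)}{-\log\delta}$. *)

From HB Require Import structures.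
From mathcomp Require Import all_boot all_order all_algebra.
From mathcomp Require Import all_classical all_reals all_analysis.
Set Implicit Arguments. Unset Strict Implicit. Unset Printing Implicit Defensive.
Import Order.TTheory GRing.Theory Num.Theory.
Import numFieldNormedType.Exports.
Local Open Scope classical_set_scope.
Local Open Scope ring_scope.

(* Evaluation of a real bivariate polynomial p(x,y), represented as
   p = sum_i p_i(x) y^i with p : {poly {poly R}}. *)
Definition peval2 {R : realType} (p : {poly {poly R}}) (x y : R) : R :=
  (p.[y%:P]).[x].

Definition dist2 {R : realType} (u v : R * R) : R :=
  Num.sqrt ((u.1 - v.1) ^+ 2 + (u.2 - v.2) ^+ 2).

Definition diam_le {R : realType} (S : set (R * R)) (d : R) : Prop :=
  forall u v, S u -> S v -> dist2 u v <= d.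

Definition graph {R : realType} (h : R -> R) : set (R * R) :=
  [set uv | exists2 x, x \in `[0, 1] & uv = (x, h x)].

(* Defined as the infimum (in \bar R) of the admissible cardinalities, taken
   as a real number (it is attained and finite for bounded nonempty F). *)
Definition covering_number {R : realType} (F : set (R * R)) (d : R) : R :=
  fine (ereal_inf [set (n%:R)%:E | n in
     [set n : nat | exists A : nat -> set (R * R),
        (forall i, (i < n)%N -> diam_le (A i) d) /\
        F `<=` \bigcup_(i in [set i : nat | (i < n)%N]) A i]]).

(* Upper box dimension: limsup_{delta -> 0+} log N_delta(F) / (-log delta),
   written as inf_{eps > 0} sup_{0 < delta < eps}. *)
Definition upper_box_dim {R : realType} (F : set (R * R)) : \bar R :=
  ereal_inf [set ereal_sup [set (ln (covering_number F d) / (- ln d))%:E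
                           | d in [set d : R | 0 < d < e]]
            | e in [set e : R | 0 < e]].

From HB Require Import structures.
From mathcomp Require Import all_boot all_order all_algebra.
From mathcomp Require Import all_classical all_reals all_analysis.
From mathcomp Require Import ring lra zify.
Set Implicit Arguments. Unset Strict Implicit. Unset Printing Implicit Defensive.
Import Order.TTheory GRing.Theory Num.Theory.
Import numFieldNormedType.Exports.
Local Open Scope classical_set_scope.
Local Open Scope ring_scope.

(* On [0, 1] the functions [f], [g] are bounded and [Q(f, g)] is bounded away
   from [0], so [h = P(f, g) / Q(f, g)] satisfies
   [|h x - h y| <= L (|f x - f y| + |g x - g y|)]. Cut [0, 1] into columns of
   width [d / 2]. By the intermediate value theorem the oscillation of [f] over
   a column is at most [2 d] times the number of sets of a [d]-cover of [G(f)]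
   meeting the graph over that column, and a set of diameter [d] meets at most
   seven columns. Hence [G(h)] is covered by [O(N_d(G f) + N_d(G g))] squares
   of side [d / 2], i.e. [N_d(G h) <= K max (N_d(G f), N_d(G g))] with [K]
   independent of [d], and the factor [K] disappears in the limit defining the
   upper box dimension. *)

Section GraphCovers.
Variable R : realType.

Lemma dist2_ge_fst (u v : R * R) : `|u.1 - v.1| <= dist2 u v.
Proof.
rewrite /dist2 -sqrtr_sqr ler_sqrt; last by apply: addr_ge0; apply: sqr_ge0.
by rewrite lerDl sqr_ge0.
Qed.

Lemma dist2_ge_snd (u v : R * R) : `|u.2 - v.2| <= dist2 u v.
Proof.
rewrite /dist2 -sqrtr_sqr ler_sqrt; last by apply: addr_ge0; apply: sqr_ge0.
by rewrite lerDr sqr_ge0.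
Qed.

Lemma dist2_le_square (u v : R * R) (w d : R) :
  `|u.1 - v.1| <= w -> `|u.2 - v.2| <= w -> 2 * w <= d -> dist2 u v <= d.
Proof.
move=> h1 h2 wd.
have d0 : 0 <= d by have := le_trans (normr_ge0 _) h1; lra.
rewrite /dist2 -(ger0_norm d0) -sqrtr_sqr ler_sqrt; last exact: sqr_ge0.
move: h1 h2; rewrite !ler_norml => /andP [a1 a2] /andP [b1 b2].
set x := u.1 - v.1 in a1 a2 *; set y := u.2 - v.2 in b1 b2 *.
nra.
Qed.

Definition coverable (F : set (R * R)) (d : R) (n : nat) :=
  exists A : nat -> set (R * R),
    (forall i, (i < n)%N -> diam_le (A i) d) /\
    F `<=` \bigcup_(i in [set i : nat | (i < n)%N]) A i.

Lemma coverableS (F G : set (R * R)) d n :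
  F `<=` G -> coverable G d n -> coverable F d n.
Proof. by move=> FG [A [hA GA]]; exists A; split => // x /FG /GA. Qed.

Lemma coverableU (F G : set (R * R)) d n m :
  coverable F d n -> coverable G d m -> coverable (F `|` G) d (n + m).
Proof.
move=> [A [hA FA]] [B [hB GB]].
exists (fun i => if (i < n)%N then A i else B (i - n)%N); split.
  move=> i lt; case: ifP => [/hA //| /negbT]; rewrite -leqNgt => ni.
  apply: hB; lia.
move=> x [/FA [i /= lin Ai]|/GB [i /= lim Bi]].
  by exists i => /=; [lia | rewrite lin].
exists (n + i)%N => /=; first lia.
by rewrite ltnNge leq_addr /= addKn.
Qed.

Lemma covering_numberP (F : set (R * R)) d : (exists n, coverable F d n) ->
  exists n0, [/\ coverable F d n0, covering_number F d = n0%:R &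
                 forall n, coverable F d n -> (n0 <= n)%N].
Proof.
move=> ex.
have exb : exists n, (fun n => `[< coverable F d n >]) n.
  by case: ex => n h; exists n; apply/asboolP.
have [n0 /asboolP cov0 min0] := ex_minnP exb.
have {}min0 n : coverable F d n -> (n0 <= n)%N by move=> /asboolP; apply: min0.
exists n0; split => //; rewrite /covering_number.
suff -> : ereal_inf [set (n%:R : R)%:E | n in [set n | coverable F d n]] =
          (n0%:R : R)%:E by [].
apply: le_anti; apply/andP; split; first by apply: ereal_inf_lbound; exists n0.
by apply: le_ereal_inf_tmp => _ [n hn <-]; rewrite lee_fin ler_nat; exact: min0.
Qed.

Lemma coverable_box (a c l w d : R) : 0 < w -> 0 <= l -> 2 * w <= d ->
  coverable [set u | a <= u.1 <= a + w /\ c <= u.2 <= c + l] d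
            (Num.truncn (l / w)).+1.
Proof.
move=> w0 l0 wd.
exists (fun j => [set u | a <= u.1 <= a + w /\ c + j%:R * w <= u.2 <= c + j.+1%:R * w]).
split.
  move=> j _ u v /= [/andP [u1 u2] /andP [u3 u4]] [/andP [v1 v2] /andP [v3 v4]].
  rewrite mulrS mulrDl mul1r in u4 v4.
  apply: (dist2_le_square (w := w)) => //; rewrite ler_norml; apply/andP; split; lra.
move=> u /= [ha /andP [hc1 hc2]].
have y0 : 0 <= (u.2 - c) / w by apply: divr_ge0 => //; lra.
exists (Num.truncn ((u.2 - c) / w)) => /=.
  rewrite ltnS; apply: le_truncn; rewrite ler_pM2r ?invr_gt0 //; lra.
split => //.
have /andP [t1 t2] := truncn_itv y0.
rewrite ler_pdivlMr // in t1; rewrite ltr_pdivrMr // in t2.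
apply/andP; split; lra.
Qed.

Definition column_box (w : R) (c r : nat -> R) (k : nat) : set (R * R) :=
  [set u | k%:R * w <= u.1 <= k%:R * w + w /\
           c k - r k <= u.2 <= c k - r k + 2 * r k].

Lemma coverable_column_boxes (w d : R) (c r : nat -> R) M :
  0 < w -> 2 * w <= d -> (forall k, 0 <= r k) ->
  coverable [set u | exists2 k, (k < M)%N & column_box w c r k u] d
    (\sum_(k < M) (Num.truncn (2 * r k / w)).+1)%N.
Proof.
move=> w0 wd r0; elim: M => [|M IH].
  by rewrite big_ord0; exists (fun=> set0); split => // u [k].
rewrite big_ord_recr /=.
apply: coverableS (coverableU IH (coverable_box (M%:R * w) (c M - r M) w0 _ wd)).
  move=> u [k]; rewrite ltnS leq_eqVlt => /orP [/eqP ->|km] pk; last by left; exists k.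
  by right.
exact: mulr_ge0.
Qed.

Lemma coverable_graph_columns (phi : R -> R) (w d : R) M (c r : nat -> R) :
  0 < w -> 2 * w <= d -> (forall k, 0 <= r k) ->
  (forall x, x \in `[0, 1] -> exists2 k, (k < M)%N & k%:R * w <= x <= k.+1%:R * w) ->
  (forall k x, (k < M)%N -> x \in `[0, 1] -> k%:R * w <= x <= k.+1%:R * w ->
      `|phi x - c k| <= r k) ->
  coverable (graph phi) d (\sum_(k < M) (Num.truncn (2 * r k / w)).+1)%N.
Proof.
move=> w0 wd r0 hcol hb.
apply: coverableS (coverable_column_boxes c M w0 wd r0).
move=> _ [x x01 ->]; have [k kM hk] := hcol x x01; exists k => //.
have := hb k x kM x01 hk; rewrite ler_norml => /andP [h1 h2].
move: hk; rewrite mulrS mulrDl mul1r => hk.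
by split => //=; apply/andP; split; lra.
Qed.

Definition ncolumns (w : R) : nat := (Num.truncn (1 / w)).+1.

Lemma ncolumns_cover (w : R) : 0 < w ->
  [/\ forall x, x \in `[0, 1] ->
        exists2 k, (k < ncolumns w)%N & k%:R * w <= x <= k.+1%:R * w,
      forall k, (k < ncolumns w)%N -> k%:R * w <= 1 &
      (ncolumns w)%:R <= 1 / w + 1].
Proof.
move=> w0; have iw0 : 0 <= 1 / w by apply: divr_ge0 => //; exact: ltW.
split.
- move=> x; rewrite in_itv /= => /andP [x0 x1].
  have xw0 : 0 <= x / w by apply: divr_ge0 => //; exact: ltW.
  exists (Num.truncn (x / w)).
    rewrite ltnS; apply: le_truncn; apply: ler_pM => //.
    by rewrite invr_ge0; apply: ltW.
  have /andP [t1 t2] := truncn_itv xw0.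
  rewrite ler_pdivlMr // in t1; rewrite ltr_pdivrMr // in t2.
  by apply/andP; split => //; apply: ltW.
- move=> k; rewrite ltnS => hk.
  have := truncn_le (1 / w); rewrite iw0 => h.
  have : k%:R <= 1 / w by apply: le_trans h; rewrite ler_nat.
  by rewrite ler_pdivlMr.
- rewrite /ncolumns -addn1 natrD lerD2r.
  by have := truncn_le (1 / w); rewrite iw0.
Qed.

Lemma continuous_itv01_bounded (phi : R -> R) :
  {within `[0, 1]%classic, continuous phi} ->
  exists B, 0 <= B /\ forall x, x \in `[0, 1] -> `|phi x| <= B.
Proof.
move=> cphi.
have cnorm : {within `[0, 1]%classic, continuous (fun x => `|phi x|)}.
  by move=> x; apply: cvg_norm; exact: cphi.
have [c _ hc] := EVT_max ler01 cnorm.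
by exists `|phi c|.
Qed.

Lemma coverable_graph_ex (phi : R -> R) (d : R) :
  {within `[0, 1]%classic, continuous phi} -> 0 < d ->
  exists n, coverable (graph phi) d n.
Proof.
move=> cphi d0.
have [B [B0 hB]] := continuous_itv01_bounded cphi.
have w0 : 0 < d / 2 by apply: divr_gt0.
have [hcol _ _] := ncolumns_cover w0.
eexists; apply: (@coverable_graph_columns phi (d / 2) d _ (fun=> 0) (fun=> B) w0).
- by rewrite mulrC divfK.
- by [].
- exact: hcol.
by move=> k x _ x01 _; rewrite subr0; exact: hB.
Qed.

Lemma itv_length_le_cover (lo hi d : R) (n : nat) (P : nat -> bool) (c : nat -> R) :
  0 <= d -> lo <= hi ->
  (forall z, lo <= z <= hi -> exists2 i, (i < n)%N & P i /\ `|z - c i| <= d) ->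
  hi - lo <= (\sum_(i < n) (P i)%:R) * (2 * d).
Proof.
move=> d0 lohi cov.
pose F k : set R := if P k then `[c k - d, c k + d]%classic else set0.
have mF k : measurable (F k) by rewrite /F; case: (P k) => //; exact: measurable_itv.
have lebF k : lebesgue_measure (F k) = ((P k)%:R * (2 * d))%:E.
  rewrite /F; case: (P k); last by rewrite measure0 mul0r.
  rewrite lebesgue_measure_itv /= lte_fin.
  case: ltP => h; first by rewrite mul1r -EFinD; congr (_%:E); lra.
  have -> : d = 0 by lra.
  by rewrite !mulr0.
have sub : `[lo, hi]%classic `<=` \big[setU/set0]_(k < n) F k.
  move=> z /=; rewrite in_itv /= => /cov [i lti [Pi hz]].
  rewrite -bigcup_mkord; exists i => //.
  rewrite /F Pi /= in_itv /=.
  by move: hz; rewrite ler_norml => /andP [h1 h2]; apply/andP; split; lra.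
have : (lebesgue_measure `[lo, hi]%classic <=
         \sum_(k < n) ((P k)%:R * (2 * d))%:E)%E.
  rewrite -(eq_bigr _ (fun (k : 'I_n) _ => lebF k)).
  exact: (@content_subadditive _ _ _ (@lebesgue_measure R) _ F n
    (fun k _ => mF k) (measurable_itv _) sub).
rewrite sumEFin lebesgue_measure_itv /=.
rewrite lte_fin -big_distrl /=.
case: ltP => h; first by rewrite -EFinD lee_fin.
move=> _; have -> : hi - lo = 0 by lra.
by apply: mulr_ge0; [apply: sumr_ge0 => i _; exact: ler0n | lra].
Qed.

Lemma coverable_graph_lb (phi : R -> R) (d : R) n :
  0 <= d -> coverable (graph phi) d n -> 1 <= n%:R * (2 * d).
Proof.
move=> d0 [A [hd hc]].
have hit z : 0 <= z <= 1 -> exists2 i, (i < n)%N &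
    true /\ `|z - (xget (0, 0) (A i)).1| <= d.
  move=> z01; have /hc [i /= lin Ai] : graph phi (z, phi z).
    by exists z => //; rewrite in_itv.
  exists i => //; split => //.
  have Ax : A i (xget (0, 0) (A i)) by apply: xgetI Ai.
  exact: le_trans (dist2_ge_fst (z, phi z) _) (hd i lin _ _ Ai Ax).
have := itv_length_le_cover (P := fun=> true) d0 ler01 hit.
by rewrite subr0 sumr_const card_ord mulr1n.
Qed.

Definition meets_graph (phi : R -> R) (A : set (R * R)) (s t : R) : bool :=
  `[< exists t0, s <= t0 <= t /\ A (t0, phi t0) >].

Lemma oscillation_le_cover (phi : R -> R) d n (A : nat -> set (R * R)) s t :
  {within `[0, 1]%classic, continuous phi} -> 0 <= d ->
  (forall i, (i < n)%N -> diam_le (A i) d) ->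
  graph phi `<=` \bigcup_(i in [set i : nat | (i < n)%N]) A i ->
  0 <= s -> t <= 1 -> forall x y, s <= x <= t -> s <= y <= t ->
  `|phi x - phi y| <= (\sum_(i < n) (meets_graph phi (A i) s t)%:R) * (2 * d).
Proof.
move=> cphi d0 hd hcov s0 t1.
suff H x y : s <= x <= t -> s <= y <= t -> x <= y ->
    `|phi x - phi y| <= (\sum_(i < n) (meets_graph phi (A i) s t)%:R) * (2 * d).
  move=> x y hx hy; case: (leP x y) => xy; first exact: H.
  by rewrite distrC; apply: H => //; apply: ltW.
move=> /andP [x1 x2] /andP [y1 y2] xy.
have cxy : {within `[x, y]%classic, continuous phi}.
  apply: continuous_subspaceW cphi => z /=; rewrite !in_itv /= => /andP [z1 z2].
  by apply/andP; split; lra.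
pose c i := (xget (0, 0) (A i)).2.
have hit z : Num.min (phi x) (phi y) <= z <= Num.max (phi x) (phi y) ->
    exists2 i, (i < n)%N & meets_graph phi (A i) s t /\ `|z - c i| <= d.
  move=> /(IVT xy cxy) [t0]; rewrite in_itv /= => /andP [t01 t02] phit0.
  have /hcov [i /= ltin Ai] : graph phi (t0, phi t0).
    by exists t0 => //; rewrite in_itv /=; apply/andP; split; lra.
  exists i => //; split.
    by apply/asboolP; exists t0; split => //; apply/andP; split; lra.
  have Ax : A i (xget (0, 0) (A i)) by apply: xgetI Ai.
  rewrite -phit0; exact: le_trans (dist2_ge_snd (t0, phi t0) _) (hd i ltin _ _ Ai Ax).
have mm : Num.min (phi x) (phi y) <= Num.max (phi x) (phi y).
  by case: (leP (phi x) (phi y)) => h //; apply: ltW.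
apply: le_trans (itv_length_le_cover d0 mm hit).
by case: (leP (phi x) (phi y)) => h; rewrite ler_norml; apply/andP; split; lra.
Qed.

Lemma sum_nat_window a b M :
  (\sum_(k < M) ((a <= k) && (k < b)) : nat)%N = (minn M b - a)%N.
Proof.
elim: M => [|M IH]; first by rewrite big_ord0 min0n.
by rewrite big_ord_recr /= IH; case: (leqP a M); case: (ltnP M b) => /=; lia.
Qed.

Lemma sum_clustered_le (Q : nat -> bool) M :
  (forall k k', Q k -> Q k' -> (k' <= k + 3)%N) ->
  (\sum_(k < M) (Q k : nat) <= 7)%N.
Proof.
move=> hQ.
have [/existsP [k0 Qk0]|/existsPn hn] := boolP [exists k : 'I_M, Q k]; last first.
  by rewrite big1 // => k _; rewrite (negbTE (hn k)).
apply: leq_trans (_ : (\sum_(k < M) (((k0 - 3) <= k) && (k < k0 + 4)) : nat) <= 7)%N.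
  apply: leq_sum => k _; case: (boolP (Q k)) => // Qk.
  have := hQ _ _ Qk0 Qk; have := hQ _ _ Qk Qk0.
  by move=> h1 h2; rewrite (_ : (k0 - 3 <= k) && (k < k0 + 4) = true)%N //; lia.
rewrite sum_nat_window; lia.
Qed.

Definition column_hits (phi : R -> R) (A : nat -> set (R * R)) n (w : R) k : R :=
  \sum_(i < n) (meets_graph phi (A i) (k%:R * w) (Num.min (k.+1%:R * w) 1))%:R.

(* A set of diameter [2 w] meets the graph over columns of width [w] whose
   indices differ by at most three. *)
Lemma sum_column_hits_le (phi : R -> R) (w : R) n (A : nat -> set (R * R)) M :
  0 < w -> (forall i, (i < n)%N -> diam_le (A i) (2 * w)) ->
  \sum_(k < M) column_hits phi A n w k <= 7 * (n%:R : R).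
Proof.
move=> w0 hd; rewrite /column_hits exchange_big /=.
have -> : 7 * n%:R = \sum_(i < n) (7 : R) by rewrite sumr_const card_ord mulr_natr.
apply: ler_sum => i _; rewrite -natr_sum ler_nat.
apply: (sum_clustered_le
  (Q := fun k => meets_graph phi (A i) (k%:R * w) (Num.min (k.+1%:R * w) 1))) => k k'.
move=> /asboolP [t0 [/andP [t1 t2] At0]] /asboolP [t0' [/andP [t1' t2'] At0']].
have /= := le_trans (dist2_ge_fst (t0, phi t0) (t0', phi t0')) (hd i (ltn_ord i) _ _ At0 At0').
rewrite ler_norml => /andP [e1 e2].
have t2m : t0 <= k.+1%:R * w by apply: le_trans t2 _; rewrite ge_min lexx.
have : k'%:R * w <= (k + 3)%:R * w.
  by move: t2m; rewrite natrD mulrS !mulrDl mul1r; lra.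
by rewrite ler_pM2r // ler_nat.
Qed.

Lemma column_oscillation_le (phi : R -> R) (d w : R) n (A : nat -> set (R * R)) k x :
  {within `[0, 1]%classic, continuous phi} -> 0 <= d -> 0 < w ->
  (forall i, (i < n)%N -> diam_le (A i) d) ->
  graph phi `<=` \bigcup_(i in [set i : nat | (i < n)%N]) A i ->
  k%:R * w <= 1 -> x \in `[0, 1] -> k%:R * w <= x <= k.+1%:R * w ->
  `|phi x - phi (k%:R * w)| <= column_hits phi A n w k * (2 * d).
Proof.
move=> cphi d0 w0 hd hcov kw1; rewrite in_itv /= => /andP [_ x1] /andP [xk1 xk2].
have kw0 : 0 <= k%:R * w by apply: mulr_ge0 => //; apply: ltW.
have t1 : Num.min (k.+1%:R * w) 1 <= 1 by rewrite ge_min lexx orbT.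
apply: (oscillation_le_cover cphi d0 hd hcov kw0 t1).
  by rewrite le_min xk1 xk2 x1.
by rewrite lexx le_min kw1 andbT ler_pM2r // ler_nat leqnSn.
Qed.

Lemma peval20 (x y : R) : peval2 0 x y = 0.
Proof. by rewrite /peval2 !horner0. Qed.

Lemma peval2_MXaddC (p : {poly {poly R}}) (c : {poly R}) x y :
  peval2 (p * 'X + c%:P) x y = peval2 p x y * y + c.[x].
Proof. by rewrite /peval2 hornerMXaddC hornerD hornerM hornerC. Qed.

Lemma ler_normM (a b A B : R) : `|a| <= A -> `|b| <= B -> `|a * b| <= A * B.
Proof. by move=> ha hb; rewrite normrM; apply: ler_pM. Qed.

Lemma horner_bounded_lipschitz (r : {poly R}) (B : R) : 0 <= B ->
  exists K M : R, [/\ 0 <= K, 0 <= M & forall u u', `|u| <= B -> `|u'| <= B ->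
    `|r.[u]| <= M /\ `|r.[u] - r.[u']| <= K * `|u - u'|].
Proof.
move=> B0; elim/poly_ind: r => [|r c [K [M [K0 M0 H]]]].
  by exists 0, 0; split => // u u' _ _; rewrite !horner0 subr0 normr0 mul0r.
exists (K * B + M), (M * B + `|c|); split.
- by apply: addr_ge0 => //; apply: mulr_ge0.
- by apply: addr_ge0 => //; apply: mulr_ge0.
move=> u u' hu hu'; have [h1 h2] := H u u' hu hu'; have [h1' _] := H u' u hu' hu.
rewrite !hornerMXaddC; split.
  by apply: le_trans (ler_normD _ _) _; rewrite lerD2r; exact: ler_normM.
have -> : r.[u] * u + c - (r.[u'] * u' + c) = (r.[u] - r.[u']) * u + r.[u'] * (u - u').
  by ring.
apply: le_trans (ler_normD _ _) _.
have a1 := ler_normM h2 hu; have a2 := ler_normM h1' (lexx `|u - u'|).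
have := normr_ge0 (u - u'); move: a1 a2.
set X := `|u - u'|; set P := `|_ * u|; set Q := `|_ * (u - u')|; nra.
Qed.

Lemma peval2_bounded_lipschitz (p : {poly {poly R}}) (B : R) : 0 <= B ->
  exists K M : R, [/\ 0 <= K, 0 <= M & forall x y x' y',
    `|x| <= B -> `|y| <= B -> `|x'| <= B -> `|y'| <= B ->
    `|peval2 p x y| <= M /\
    `|peval2 p x y - peval2 p x' y'| <= K * (`|x - x'| + `|y - y'|)].
Proof.
move=> B0; elim/poly_ind: p => [|p c [K [M [K0 M0 H]]]].
  by exists 0, 0; split => // *; rewrite !peval20 subr0 normr0 mul0r.
have [Kc [Mc [Kc0 Mc0 Hc]]] := horner_bounded_lipschitz c B0.
exists (K * B + M + Kc), (M * B + Mc); split.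
- by apply: addr_ge0 => //; apply: addr_ge0 => //; apply: mulr_ge0.
- by apply: addr_ge0 => //; apply: mulr_ge0.
move=> x y x' y' hx hy hx' hy'.
have [h1 h2] := H x y x' y' hx hy hx' hy'.
have [h1' _] := H x' y' x y hx' hy' hx hy.
have [c1 c2] := Hc x x' hx hx'.
rewrite !peval2_MXaddC; split.
  by apply: le_trans (ler_normD _ _) _; apply: lerD => //; exact: ler_normM.
set a := peval2 p x y; set a' := peval2 p x' y'.
have -> : a * y + c.[x] - (a' * y' + c.[x']) =
   (a - a') * y + a' * (y - y') + (c.[x] - c.[x']) by ring.
apply: le_trans (ler_normD _ _) _.
have a1 := ler_normM h2 hy; have a2 := ler_normM h1' (lexx `|y - y'|).
have := ler_normD ((a - a') * y) (a' * (y - y')).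
have := normr_ge0 (y - y'); have := normr_ge0 (x - x').
move: a1 a2 c2.
set X := `|x - x'|; set Y := `|y - y'|; set P := `|_ * y|; set Q := `|_ * (y - y')|.
set S := `|_ + _|; set T := `|c.[x] - c.[x']|.
nra.
Qed.

Lemma continuous_peval2 (p : {poly {poly R}}) (A : set R) (f g : R -> R) :
  {within A, continuous f} -> {within A, continuous g} ->
  {within A, continuous (fun x => peval2 p (f x) (g x))}.
Proof.
move=> cf cg; elim/poly_ind: p => [|p c IH].
  by under eq_fun do rewrite peval20; exact: cst_continuous.
under eq_fun do rewrite peval2_MXaddC.
move=> x; apply: cvgD; first by apply: cvgM; [exact: IH | exact: cg].
exact: (continuous_comp (cf x) (@continuous_horner R c (f x))).
Qed.

Lemma ler_norm_divB (p1 p2 q1 q2 m Mp Mq Dp Dq : R) :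
  0 < m -> m <= `|q1| -> m <= `|q2| -> `|p2| <= Mp -> `|q2| <= Mq ->
  `|p1 - p2| <= Dp -> `|q1 - q2| <= Dq ->
  `|p1 / q1 - p2 / q2| <= (Dp * Mq + Mp * Dq) / (m * m).
Proof.
move=> m0 hq1 hq2 hp2 hMq hDp hDq.
have q10 : q1 != 0 by rewrite -normr_gt0; lra.
have q20 : q2 != 0 by rewrite -normr_gt0; lra.
have -> : p1 / q1 - p2 / q2 = ((p1 - p2) * q2 + p2 * (q2 - q1)) / (q1 * q2).
  by field; apply/andP; split.
rewrite normrM normfV normrM.
have mm0 : 0 < m * m by apply: mulr_gt0.
have qq : m * m <= `|q1| * `|q2| by apply: ler_pM => //; lra.
have hn : `|(p1 - p2) * q2 + p2 * (q2 - q1)| <= Dp * Mq + Mp * Dq.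
  apply: le_trans (ler_normD _ _) _; apply: lerD; first exact: ler_normM.
  by apply: ler_normM; rewrite // distrC.
have D0 : 0 <= Dp * Mq + Mp * Dq by apply: le_trans hn; apply: normr_ge0.
rewrite ler_pdivrMr; last lra.
apply: le_trans hn _.
rewrite mulrAC -mulrA; apply: ler_peMr => //.
by rewrite ler_pdivlMr // mul1r.
Qed.

(* [|Q(f, g)|] attains a positive minimum on [0, 1], and [P], [Q] are
   Lipschitz on a square containing all the values [(f x, g x)]. *)
Lemma peval2_ratio_controlled (f g : R -> R) (p q : {poly {poly R}}) :
  {within `[0, 1]%classic, continuous f} ->
  {within `[0, 1]%classic, continuous g} ->
  (forall x, x \in `[0, 1] -> peval2 q (f x) (g x) != 0) ->
  exists L : R, 0 <= L /\ forall x y, x \in `[0, 1] -> y \in `[0, 1] ->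
    `|peval2 p (f x) (g x) / peval2 q (f x) (g x) -
      peval2 p (f y) (g y) / peval2 q (f y) (g y)|
    <= L * (`|f x - f y| + `|g x - g y|).
Proof.
move=> cf cg qn0.
have [Bf [Bf0 hBf]] := continuous_itv01_bounded cf.
have [Bg [Bg0 hBg]] := continuous_itv01_bounded cg.
have B0 : 0 <= Bf + Bg by apply: addr_ge0.
have hB x : x \in `[0, 1] -> `|f x| <= Bf + Bg /\ `|g x| <= Bg + Bf.
  by move=> x01; have := hBf x x01; have := hBg x x01; split; lra.
have cQ : {within `[0, 1]%classic, continuous (fun x => `|peval2 q (f x) (g x)|)}.
  by move=> x; apply: cvg_norm; exact: continuous_peval2.
have [c0 c01 hc0] := EVT_min ler01 cQ.
set m := `|peval2 q (f c0) (g c0)| in hc0.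
have m0 : 0 < m by rewrite /m normr_gt0; apply: qn0.
have [Kp [Mp [Kp0 Mp0 Hp]]] := peval2_bounded_lipschitz p B0.
have [Kq [Mq [Kq0 Mq0 Hq]]] := peval2_bounded_lipschitz q B0.
exists ((Kp * Mq + Mp * Kq) / (m * m)); split.
  by apply: divr_ge0; [apply: addr_ge0; apply: mulr_ge0 | apply: mulr_ge0; apply: ltW].
move=> x y x01 y01.
have [fx gx] := hB x x01; have [fy gy] := hB y y01; rewrite addrC in gx gy.
have [_ hp] := Hp _ _ _ _ fx gx fy gy; have [hp2 _] := Hp _ _ _ _ fy gy fx gx.
have [_ hq] := Hq _ _ _ _ fx gx fy gy; have [hq2 _] := Hq _ _ _ _ fy gy fx gx.
have := ler_norm_divB m0 (hc0 x x01) (hc0 y y01) hp2 hq2 hp hq.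
set D := `|f x - f y| + `|g x - g y|.
by have -> : (Kp * Mq + Mp * Kq) / (m * m) * D = (Kp * D * Mq + Mp * (Kq * D)) / (m * m) by ring.
Qed.

Lemma coverable_graph_ge1 (phi : R -> R) (d : R) n :
  0 <= d -> coverable (graph phi) d n -> 1 <= n%:R :> R.
Proof.
move=> d0 cov; have := coverable_graph_lb d0 cov.
by rewrite ler1n lt0n; case: n {cov} => [|n] //; rewrite mul0r ler10.
Qed.

Lemma ncolumns_le (phi : R -> R) (w : R) n :
  0 < w -> coverable (graph phi) (2 * w) n -> (ncolumns w)%:R <= 5 * n%:R :> R.
Proof.
move=> w0 cov; have [_ _ hM] := ncolumns_cover w0.
have w20 : 0 <= 2 * w by apply: mulr_ge0 => //; apply: ltW.
have lb := coverable_graph_lb w20 cov; have n1 := coverable_graph_ge1 w20 cov.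
have : 1 / w <= 4 * n%:R by rewrite ler_pdivrMr //; nra.
lra.
Qed.

Section ControlledGraph.
Variables (f g h : R -> R) (L : R).
Hypotheses (cf : {within `[0, 1]%classic, continuous f})
  (cg : {within `[0, 1]%classic, continuous g}) (L0 : 0 <= L)
  (hL : forall x y, x \in `[0, 1] -> y \in `[0, 1] ->
     `|h x - h y| <= L * (`|f x - f y| + `|g x - g y|)).
Variables (w : R) (nf ng : nat) (Af Ag : nat -> set (R * R)).
Hypotheses (w0 : 0 < w)
  (hdf : forall i, (i < nf)%N -> diam_le (Af i) (2 * w))
  (hcf : graph f `<=` \bigcup_(i in [set i : nat | (i < nf)%N]) Af i)
  (hdg : forall i, (i < ng)%N -> diam_le (Ag i) (2 * w))
  (hcg : graph g `<=` \bigcup_(i in [set i : nat | (i < ng)%N]) Ag i).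

Local Notation hits k := (column_hits f Af nf w k + column_hits g Ag ng w k).

Let hits_ge0 k : 0 <= hits k.
Proof. by apply: addr_ge0; apply: sumr_ge0 => i _; apply: ler0n. Qed.

(* Over column [k] the graph of [h] lies in a box of height
   [2 L (hits k) (4 w)], cut into squares of side [w]. *)
Lemma coverable_controlled_graph :
  coverable (graph h) (2 * w)
    (\sum_(k < ncolumns w) (Num.truncn (8 * L * hits k)).+1)%N.
Proof.
have w40 : 0 <= 2 * (2 * w) by rewrite !mulr_ge0 // ltW.
pose r k := L * (hits k * (2 * (2 * w))).
have r0 k : 0 <= r k by apply: mulr_ge0 => //; exact: mulr_ge0 (hits_ge0 k) w40.
rewrite (eq_bigr (fun k : 'I_ _ => (Num.truncn (2 * r k / w)).+1)); last first.
  by move=> k _; congr (Num.truncn _).+1; rewrite /r; field; rewrite gt_eqF.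
have [hcol hcolk _] := ncolumns_cover w0.
apply: (coverable_graph_columns (c := fun k => h (k%:R * w)) w0 (lexx _) r0 hcol).
move=> k x kM x01 hx.
have kw01 : k%:R * w \in `[0, 1].
  by rewrite in_itv /= hcolk // andbT; apply: mulr_ge0 => //; apply: ltW.
apply: le_trans (hL x01 kw01) _; rewrite /r ler_wpM2l // mulrDl.
have w20 : 0 <= 2 * w by apply: mulr_ge0 => //; apply: ltW.
by apply: lerD; apply: column_oscillation_le => //; apply: hcolk.
Qed.

Lemma sum_column_covers_le :
  ((\sum_(k < ncolumns w) (Num.truncn (8 * L * hits k)).+1)%N%:R : R) <=
    56 * L * (nf%:R + ng%:R) + (ncolumns w)%:R.
Proof.
have L8 : 0 <= 8 * L by apply: mulr_ge0.
rewrite natr_sum.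
apply: le_trans (_ : \sum_(k < ncolumns w) (8 * L * hits k + 1) <= _).
  apply: ler_sum => k _; rewrite mulrSr lerD2r truncn_le.
  exact: mulr_ge0 L8 (hits_ge0 k).
rewrite big_split /= sumr_const card_ord lerD2r -mulr_sumr big_split /=.
rewrite (_ : 56 * L * _ = 8 * L * (7 * nf%:R + 7 * ng%:R)); last by ring.
by apply: ler_wpM2l => //; apply: lerD; exact: sum_column_hits_le.
Qed.

End ControlledGraph.

Lemma covering_number_controlled_le (f g h : R -> R) (L : R) :
  {within `[0, 1]%classic, continuous f} ->
  {within `[0, 1]%classic, continuous g} -> 0 <= L ->
  (forall x y, x \in `[0, 1] -> y \in `[0, 1] ->
     `|h x - h y| <= L * (`|f x - f y| + `|g x - g y|)) ->
  forall d, 0 < d ->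
  [/\ 1 <= covering_number (graph h) d, 1 <= covering_number (graph f) d,
      1 <= covering_number (graph g) d &
      covering_number (graph h) d <= 2 * (56 * L + 5) *
        Num.max (covering_number (graph f) d) (covering_number (graph g) d)].
Proof.
move=> cf cg L0 hL d d0.
have [w w0 ->] : exists2 w, 0 < w & d = 2 * w.
  by exists (d / 2); [exact: divr_gt0 | rewrite mulrC divfK].
have w2 : 0 < 2 * w by exact: mulr_gt0.
have [nf [covf -> _]] := covering_numberP (coverable_graph_ex cf w2).
have [ng [covg -> _]] := covering_numberP (coverable_graph_ex cg w2).
have [Af [hdf hcf]] := covf; have [Ag [hdg hcg]] := covg.
have covh := coverable_controlled_graph cf cg L0 hL w0 hdf hcf hdg hcg.
have [nh [covh' -> minh]] := covering_numberP (ex_intro _ _ covh).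
have nf1 := coverable_graph_ge1 (ltW w2) covf.
have ng1 := coverable_graph_ge1 (ltW w2) covg.
split => //; first exact: coverable_graph_ge1 (ltW w2) covh'.
have nhb : nh%:R <= 56 * L * (nf%:R + ng%:R) + 5 * nf%:R.
  apply: le_trans (_ : _ <= 56 * L * (nf%:R + ng%:R) + (ncolumns w)%:R) _.
    apply: le_trans (sum_column_covers_le f g L0 w0 hdf hdg).
    by rewrite ler_nat; exact: minh.
  by rewrite lerD2l; exact: ncolumns_le w0 covf.
have := le_max (nf%:R : R) nf%:R ng%:R; have := le_max (ng%:R : R) nf%:R ng%:R.
rewrite !lexx ?orbT /= => hg hf.
nra.
Qed.

Lemma ln_ratio_le (Nh Nf Ng K d r e : R) : 0 < K -> 0 < d < 1 ->
  1 <= Nh -> 1 <= Nf -> 1 <= Ng -> Nh <= K * Num.max Nf Ng ->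
  ln Nf / (- ln d) <= r -> ln Ng / (- ln d) <= r -> ln K <= e * (- ln d) ->
  ln Nh / (- ln d) <= r + e.
Proof.
move=> K0 dd h1 f1 g1 hK hf hg he.
have ld : 0 < - ln d by rewrite oppr_gt0; apply: ln_lt0.
rewrite ler_pdivrMr // in hf; rewrite ler_pdivrMr // in hg; rewrite ler_pdivrMr //.
suff key N : 1 <= N -> Nh <= K * N -> ln N <= r * - ln d -> ln Nh <= (r + e) * - ln d.
  by case: (leP Nf Ng) hK => _ hK; [apply: (key Ng) | apply: (key Nf)].
move=> N1 hN hr.
have : ln Nh <= ln (K * N) by rewrite ler_ln // posrE; [lra | apply: mulr_gt0; lra].
by rewrite lnM ?posrE; [rewrite mulrDl; lra | lra | lra].
Qed.

Lemma upper_box_dim_lt (F : set (R * R)) (r : R) : (upper_box_dim F < r%:E)%E ->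
  exists2 e : R, 0 < e &
    forall d, 0 < d < e -> ln (covering_number F d) / (- ln d) <= r.
Proof.
rewrite /upper_box_dim => /ereal_inf_lt [_ [e /= e0 <-] hs].
exists e => // d hd.
rewrite -lee_fin; apply: le_trans (ltW hs).
by apply: ereal_sup_ubound; exists d.
Qed.

Section BoxDimensionComparison.
Variables (F G1 G2 : set (R * R)) (K : R).
Hypotheses (K0 : 0 < K) (hK : forall d, 0 < d < 1 ->
  [/\ 1 <= covering_number F d, 1 <= covering_number G1 d,
      1 <= covering_number G2 d &
      covering_number F d <= K * Num.max (covering_number G1 d) (covering_number G2 d)]).

(* The factor [K] costs [ln K / (- ln d)], which is below [e] once
   [d < exp (- ln K / e)]. *)
Lemma upper_box_dim_le_add (r e : R) :
  (maxe (upper_box_dim G1) (upper_box_dim G2) < r%:E)%E -> 0 < e ->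
  (upper_box_dim F <= (r + e)%:E)%E.
Proof.
rewrite gt_max => /andP [/upper_box_dim_lt [e1 e10 h1] /upper_box_dim_lt [e2 e20 h2]] e0.
pose e3 := Num.min (Num.min e1 e2) (Num.min 1 (expR (- ln K / e))).
have e30 : 0 < e3 by rewrite !lt_min e10 e20 ltr01 expR_gt0.
apply: (@le_trans _ _ (ereal_sup [set (ln (covering_number F d) / (- ln d))%:E
                                   | d in [set d : R | 0 < d < e3]])).
  by apply: ereal_inf_lbound; exists e3.
apply: ge_ereal_sup => _ [d /= /andP [d0 de3] <-]; rewrite lee_fin.
move: de3; rewrite !lt_min => /andP [/andP [de1 de2] /andP [d1 dK]].
have dd : 0 < d < 1 by apply/andP.
have [hF h1' h2' hb] := hK dd.
apply: (ln_ratio_le K0 dd hF h1' h2' hb); [by apply: h1; rewrite d0 | by apply: h2; rewrite d0 |].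
have : ln d < - ln K / e by rewrite -(expRK (- ln K / e)) ltr_ln ?posrE ?expR_gt0.
by rewrite ltr_pdivlMr // => hl; lra.
Qed.

Lemma upper_box_dim_le_maxe :
  (upper_box_dim F <= maxe (upper_box_dim G1) (upper_box_dim G2))%E.
Proof.
apply/lee_addgt0Pr => e e0.
case: (maxe _ _) upper_box_dim_le_add => [r| |] hle.
- rewrite -EFinD (_ : r + e = r + e / 2 + e / 2); last by field.
  by apply: hle; [rewrite lte_fin; lra | exact: divr_gt0].
- by rewrite leey.
- case E: (upper_box_dim F) (hle 0 1 (ltNyr 0) ltr01) => [x| |] //.
  by have := hle (x - 2)%R 1 (ltNyr _) ltr01; rewrite E lee_fin => ?; exfalso; lra.
Qed.

End BoxDimensionComparison.

End GraphCovers.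

Theorem proposition3p8 (R : realType) (f g : R -> R)
  (p q : {poly {poly R}}) :
  {within `[0, 1]%classic, continuous f} ->
  {within `[0, 1]%classic, continuous g} ->
  (forall x : R, x \in `[0, 1] -> peval2 q (f x) (g x) != 0) ->
  Order.le (upper_box_dim (graph (fun x => peval2 p (f x) (g x) / peval2 q (f x) (g x))))
   (maxe (upper_box_dim (graph f)) (upper_box_dim (graph g))).
Proof.
move=> cf cg qn0.
have [L [L0 hL]] := peval2_ratio_controlled p cf cg qn0.
have K0 : 0 < 2 * (56 * L + 5) by lra.
apply: (upper_box_dim_le_maxe K0) => d /andP [d0 _].
exact: covering_number_controlled_le cf cg L0 hL d d0.
Qed.
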